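(* Let $H\subset\mathbb{R}^n$ be a bounded domain and let $u_1,u_2\in C^2(H)\cap C(\overline H)$ be bounded functions with $D_{H,\varphi}u_1\le D_{H,\varphi}u_2$ in $H$ and $u_1=u_2=\varphi$ on $\partial H$. Then $u_1\le u_2$ in $H$.
   Context: For an open set $H\subset\mathbb{R}^n$, a function $\varphi$ on $\partial H$ and $u$ on $\overline H$ with $u=\varphi$ on $\partial H$, let $v$ be the bounded harmonic function in $\Omega=H\times(0,\infty)$, continuous up to the boundary, with $v(x,0)=u(x)$ for $x\in H$ and $v(x,\lambda)=\varphi(x)$ on $\partial H\times[0,\infty)$. Define $D_{H,\varphi}u(x):=-\partial_\lambda v(x,0)$ for $x\in H$. *)

From Stdlib Require Import Reals Lra Arith.
Open Scope R_scope.

(* Points of R^n are represented as functions nat -> R vanishing at all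
   coordinates i >= n.  For points of R^{n+1} = R^n x R, coordinate n is
   the extra variable lambda. *)
Definition pt := nat -> R.

Definition inRn (n : nat) (x : pt) : Prop := forall i, (n <= i)%nat -> x i = 0.

Fixpoint fsum (n : nat) (g : nat -> R) : R :=
  match n with O => 0 | S k => fsum k g + g k end.

Definition dist (n : nat) (x y : pt) : R := sqrt (fsum n (fun i => (x i - y i) ^ 2)).

Definition origin : pt := fun _ => 0.

Definition is_open (n : nat) (H : pt -> Prop) : Prop :=
  (forall x, H x -> inRn n x) /\
  (forall x, H x -> exists r, 0 < r /\ forall y, inRn n y -> dist n x y < r -> H y).

Definition closure (n : nat) (H : pt -> Prop) (y : pt) : Prop :=
  inRn n y /\ forall r, 0 < r -> exists x, H x /\ dist n x y < r.

Definition boundary (n : nat) (H : pt -> Prop) (y : pt) : Prop :=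
  closure n H y /\ ~ H y.

Definition bounded_set (n : nat) (H : pt -> Prop) : Prop :=
  exists M, forall x, H x -> dist n x origin <= M.

Definition connected (n : nat) (H : pt -> Prop) : Prop :=
  forall A B : pt -> Prop,
    (forall x, H x <-> (A x \/ B x)) -> (forall x, ~ (A x /\ B x)) ->
    is_open n A -> is_open n B -> (forall x, ~ A x) \/ (forall x, ~ B x).

Definition bounded_domain (n : nat) (H : pt -> Prop) : Prop :=
  is_open n H /\ connected n H /\ (exists x, H x) /\ bounded_set n H.

Definition cont_on (n : nat) (S : pt -> Prop) (f : pt -> R) : Prop :=
  forall x, S x -> forall eps, 0 < eps -> exists d, 0 < d /\
    forall y, S y -> dist n x y < d -> Rabs (f y - f x) < eps.

Definition bounded_on (S : pt -> Prop) (f : pt -> R) : Prop :=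
  exists M, forall x, S x -> Rabs (f x) <= M.

Definition upd (x : pt) (i : nat) (t : R) : pt :=
  fun j => if Nat.eqb j i then x j + t else x j.

Definition partial_at (f : pt -> R) (i : nat) (x : pt) (l : R) : Prop :=
  derivable_pt_lim (fun t => f (upd x i t)) 0 l.

Definition C2_with (n : nat) (H : pt -> Prop) (f : pt -> R)
    (d1 : nat -> pt -> R) (d2 : nat -> nat -> pt -> R) : Prop :=
  (forall i x, (i < n)%nat -> H x -> partial_at f i x (d1 i x)) /\
  (forall i j x, (i < n)%nat -> (j < n)%nat -> H x -> partial_at (d1 i) j x (d2 i j x)) /\
  (forall i, (i < n)%nat -> cont_on n H (d1 i)) /\
  (forall i j, (i < n)%nat -> (j < n)%nat -> cont_on n H (d2 i j)).

Definition C2_on (n : nat) (H : pt -> Prop) (f : pt -> R) : Prop :=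
  exists d1 d2, C2_with n H f d1 d2.

Definition harmonic_on (n : nat) (S : pt -> Prop) (v : pt -> R) : Prop :=
  exists d1 d2, C2_with n S v d1 d2 /\
    forall y, S y -> fsum n (fun i => d2 i i y) = 0.

Definition trunc (n : nat) (y : pt) : pt := fun i => if Nat.ltb i n then y i else 0.
Definition ext (n : nat) (x : pt) (l : R) : pt :=
  fun i => if Nat.ltb i n then x i else if Nat.eqb i n then l else 0.

Definition Omega (n : nat) (H : pt -> Prop) (y : pt) : Prop :=
  inRn (S n) y /\ H (trunc n y) /\ 0 < y n.

Definition right_deriv (g : R -> R) (a l : R) : Prop :=
  forall eps, 0 < eps -> exists d, 0 < d /\
    forall h, 0 < h < d -> Rabs ((g (a + h) - g a) / h - l) < eps.

(* w = D_{H,phi} u : w(x) = - d/dlambda v(x,0), where v is the bounded harmonic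
   function in Omega, continuous up to the boundary, with v(x,0) = u(x) on H and
   v(x,lambda) = phi(x) on (boundary H) x [0,oo). *)
Definition DtN (n : nat) (H : pt -> Prop) (phi u w : pt -> R) : Prop :=
  exists v : pt -> R,
    harmonic_on (S n) (Omega n H) v /\
    bounded_on (Omega n H) v /\
    cont_on (S n) (closure (S n) (Omega n H)) v /\
    (forall x, H x -> v (ext n x 0) = u x) /\
    (forall x l, boundary n H x -> 0 <= l -> v (ext n x l) = phi x) /\
    (forall x, H x -> right_deriv (fun l => v (ext n x l)) 0 (- w x)).

From Pilot Require Import Defs.
From Stdlib Require Import Reals Lra Lia FunctionalExtensionality ClassicalEpsilon Classical.
From Coquelicot Require Import Coquelicot.
(* Re-import so that [dist] denotes the Euclidean distance of Defs, not Rlimit.dist. *)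
Import Defs.
Open Scope R_scope.

(* Let [v1], [v2] be the harmonic extensions defining [w1 = D u1] and
   [w2 = D u2] on the half-cylinder [Omega = H x (0, oo)].  It suffices to show
   [v1 <= v2] on the bottom face [H x {0}], where they equal [u1], [u2].  If
   [m = v1 - v2 > 0] at some bottom point, consider on the compact set
   [K = closure Omega /\ {lambda <= L}] the function
     W = v1 - v2 - c lambda + eps (|x|^2 + 1 - e^(-lambda)),
   with [eps] small compared to [m], [c = eps / 2] and [c L] bounding [|v1 - v2|].
   [W] attains its maximum on [K] (Bolzano-Weierstrass), and this maximum exceeds
   [eps sup (|x|^2 + 1)], the largest value [W] can take on the lateral boundary
   (where [v1 = v2 = phi]) or on the top face.  It cannot sit on the bottom, because
   [d W / d lambda >= w2 - w1 - c + eps > 0] there, nor in the interior, where [W] is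
   strictly subharmonic and the second derivative test along coordinate lines fails. *)

Lemma fsum_ext N f g : (forall i, (i < N)%nat -> f i = g i) -> fsum N f = fsum N g.
Proof.
  induction N as [|N IH]; intros Hfg; simpl; [reflexivity|].
  rewrite IH by (intros; apply Hfg; lia). rewrite Hfg by lia. reflexivity.
Qed.

Lemma fsum_plus N f g : fsum N (fun i => f i + g i) = fsum N f + fsum N g.
Proof. induction N as [|N IH]; simpl; [lra|]. rewrite IH; lra. Qed.

Lemma fsum_opp N f : fsum N (fun i => - f i) = - fsum N f.
Proof. induction N as [|N IH]; simpl; [lra|]. rewrite IH; lra. Qed.

Lemma fsum_const N c : fsum N (fun _ => c) = INR N * c.
Proof. induction N as [|N IH]; simpl fsum; [simpl; lra|]. rewrite IH, S_INR; lra. Qed.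

Lemma fsum_le N f g : (forall i, (i < N)%nat -> f i <= g i) -> fsum N f <= fsum N g.
Proof.
  induction N as [|N IH]; intros Hfg; simpl; [lra|].
  pose proof (Hfg N (Nat.lt_succ_diag_r N)).
  pose proof (IH (fun i Hi => Hfg i (Nat.lt_lt_succ_r i N Hi))). lra.
Qed.

Lemma fsum_nonneg N f : (forall i, (i < N)%nat -> 0 <= f i) -> 0 <= fsum N f.
Proof.
  intros Hf. replace 0 with (fsum N (fun _ => 0)) by (rewrite fsum_const; ring).
  now apply fsum_le.
Qed.

Lemma fsum_term N f i :
  (i < N)%nat -> (forall j, (j < N)%nat -> 0 <= f j) -> f i <= fsum N f.
Proof.
  induction N as [|N IH]; intros Hi Hpos; simpl; [lia|].
  destruct (Nat.eq_dec i N) as [->|Hne].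
  - pose proof (fsum_nonneg N f (fun j Hj => Hpos j (Nat.lt_lt_succ_r j N Hj))). lra.
  - pose proof (Hpos N (Nat.lt_succ_diag_r N)).
    pose proof (IH ltac:(lia) (fun j Hj => Hpos j (Nat.lt_lt_succ_r j N Hj))). lra.
Qed.

Lemma fsum_sq_le N f : fsum N (fun i => f i ^ 2) <= fsum N (fun i => Rabs (f i)) ^ 2.
Proof.
  induction N as [|N IH]; simpl; [lra|].
  pose proof (fsum_nonneg N (fun i => Rabs (f i)) (fun i _ => Rabs_pos (f i))).
  pose proof (Rabs_pos (f N)).
  replace (f N * (f N * 1)) with (Rabs (f N) * Rabs (f N))
    by (rewrite <- Rabs_mult, Rabs_right by nra; ring).
  simpl in IH. nra.
Qed.

Lemma dist_sym N x y : dist N x y = dist N y x.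
Proof. unfold dist. f_equal. apply fsum_ext; intros; ring. Qed.

Lemma dist_refl N x : dist N x x = 0.
Proof.
  unfold dist. rewrite (fsum_ext N _ (fun _ => 0)) by (intros; ring).
  rewrite fsum_const, Rmult_0_r. apply sqrt_0.
Qed.

Lemma coord_le_dist N x y i : (i < N)%nat -> Rabs (x i - y i) <= dist N x y.
Proof.
  intros Hi. unfold dist. rewrite <- sqrt_Rsqr_abs. apply sqrt_le_1_alt.
  replace (Rsqr (x i - y i)) with ((fun j => (x j - y j) ^ 2) i) by (unfold Rsqr; simpl; ring).
  apply (fsum_term N (fun j => (x j - y j) ^ 2)); auto. intros; apply pow2_ge_0.
Qed.

Lemma dist_coord_bound N x y e :
  (forall i, (i < N)%nat -> Rabs (x i - y i) <= e) -> dist N x y <= INR N * e.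
Proof.
  intros Hxy. apply Rle_trans with (fsum N (fun i => Rabs (x i - y i))).
  - unfold dist. rewrite <- (sqrt_pow2 (fsum N (fun i => Rabs (x i - y i))))
      by (apply fsum_nonneg; intros; apply Rabs_pos).
    apply sqrt_le_1_alt, (fsum_sq_le N (fun i => x i - y i)).
  - rewrite <- fsum_const. now apply fsum_le.
Qed.

(* A triangle inequality up to the factor [N], enough for closure arguments. *)
Lemma dist_triangle_weak N x y z : dist N x z <= INR N * (dist N x y + dist N y z).
Proof.
  apply dist_coord_bound. intros i Hi.
  pose proof (coord_le_dist N x y i Hi). pose proof (coord_le_dist N y z i Hi).
  replace (x i - z i) with ((x i - y i) + (y i - z i)) by ring.
  eapply Rle_trans; [apply Rabs_triang|lra].
Qed.

Lemma dist_upd N x i t : dist N x (upd x i t) <= INR N * Rabs t.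
Proof.
  apply dist_coord_bound. intros j _. unfold upd. destruct (Nat.eqb j i).
  - replace (x j - (x j + t)) with (- t) by ring. rewrite Rabs_Ropp; lra.
  - rewrite Rminus_diag, Rabs_R0. apply Rabs_pos.
Qed.

Lemma INR_mul_shrink N r : 0 < r -> INR N * (r / (INR N + 1)) < r.
Proof.
  intros Hr. pose proof (pos_INR N).
  apply Rmult_lt_reg_r with (INR N + 1); [lra|].
  replace (INR N * (r / (INR N + 1)) * (INR N + 1)) with (INR N * r) by (field; lra). nra.
Qed.

Definition sqnorm (N : nat) (y : pt) : R := fsum N (fun i => y i ^ 2).

Lemma sqnorm_nonneg N y : 0 <= sqnorm N y.
Proof. apply fsum_nonneg. intros; apply pow2_ge_0. Qed.

Definition cv_pt (N : nat) (p : nat -> pt) (q : pt) : Prop :=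
  forall i, (i < N)%nat -> Un_cv (fun k => p k i) (q i).

Lemma cv_pt_pred N p q : cv_pt (S N) p q -> cv_pt N p q.
Proof. intros Hcv i Hi. apply Hcv. lia. Qed.

Lemma cv_pt_uniform N p q : cv_pt N p q -> forall e, 0 < e ->
  exists K, forall k, (K <= k)%nat -> forall i, (i < N)%nat -> Rabs (p k i - q i) < e.
Proof.
  induction N as [|N IH]; intros Hcv e He; [exists O; intros; lia|].
  destruct (IH (cv_pt_pred N p q Hcv) e He) as [K1 HK1].
  destruct (Hcv N (Nat.lt_succ_diag_r N) e He) as [K2 HK2].
  exists (max K1 K2). intros k Hk i Hi.
  destruct (Nat.eq_dec i N) as [->|Hne]; [apply HK2; lia | apply HK1; lia].
Qed.

Lemma cv_pt_dist N p q : cv_pt N p q -> forall e, 0 < e ->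
  exists K, forall k, (K <= k)%nat -> dist N (p k) q < e.
Proof.
  intros Hcv e He. pose proof (pos_INR N).
  destruct (cv_pt_uniform N p q Hcv (e / (INR N + 1))) as [K HK].
  { apply Rdiv_lt_0_compat; lra. }
  exists K. intros k Hk. eapply Rle_lt_trans; [|apply (INR_mul_shrink N e He)].
  apply dist_coord_bound. intros i Hi. left. now apply HK.
Qed.

Lemma closure_seq_closed N S p q :
  (forall k, closure N S (p k)) -> inRn N q -> cv_pt N p q -> closure N S q.
Proof.
  intros Hp Hq Hcv. split; [exact Hq|]. intros r Hr. pose proof (pos_INR N).
  set (e := r / 2 / (INR N + 1)).
  assert (He : 0 < e) by (unfold e; apply Rdiv_lt_0_compat; lra).
  destruct (cv_pt_dist N p q Hcv e He) as [K HK]. specialize (HK K (le_n K)).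
  destruct (proj2 (Hp K) e He) as [z [Hz Hzp]]. exists z. split; [exact Hz|].
  eapply Rle_lt_trans; [apply (dist_triangle_weak N z (p K) q)|].
  pose proof (INR_mul_shrink N (r / 2) ltac:(lra)).
  assert (INR N * (dist N z (p K) + dist N (p K) q) <= 2 * (INR N * e)).
  { replace (2 * (INR N * e)) with (INR N * (2 * e)) by ring.
    apply Rmult_le_compat_l; lra. }
  unfold e in *. lra.
Qed.

Lemma cont_on_seq N S f p q : cont_on N S f ->
  (forall k, S (p k)) -> S q -> cv_pt N p q -> Un_cv (fun k => f (p k)) (f q).
Proof.
  intros Hf Hp Hq Hcv e He. destruct (Hf q Hq e He) as [d [Hd Hfd]].
  destruct (cv_pt_dist N p q Hcv d Hd) as [K HK].
  exists K. intros k Hk. apply Hfd; [apply Hp|]. rewrite dist_sym. auto.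
Qed.

Lemma cv_const (a : R) : Un_cv (fun _ => a) a.
Proof. intros e He. exists O. intros. unfold Rdist. rewrite Rminus_diag, Rabs_R0. exact He. Qed.

Lemma sqnorm_cv N p q : cv_pt N p q -> Un_cv (fun k => sqnorm N (p k)) (sqnorm N q).
Proof.
  unfold sqnorm. induction N as [|N IH]; intros Hcv; simpl.
  - apply cv_const.
  - pose proof (Hcv N (Nat.lt_succ_diag_r N)) as HN.
    apply CV_plus; [apply IH, cv_pt_pred, Hcv|].
    apply CV_mult; [exact HN|]. apply CV_mult; [exact HN|apply cv_const].
Qed.

Definition increasing_index (phi : nat -> nat) : Prop := forall k, (phi k < phi (S k))%nat.

Lemma increasing_index_mono phi : increasing_index phi ->
  forall a b, (a <= b)%nat -> (phi a <= phi b)%nat.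
Proof. intros Hphi a b Hab. induction Hab as [|b _ IH]; [lia|]. specialize (Hphi b). lia. Qed.

Lemma increasing_index_ge phi : increasing_index phi -> forall k, (k <= phi k)%nat.
Proof. intros Hphi k. induction k as [|k IH]; [lia|]. specialize (Hphi k). lia. Qed.

Lemma increasing_index_comp phi psi :
  increasing_index phi -> increasing_index psi -> increasing_index (fun k => phi (psi k)).
Proof.
  intros Hphi Hpsi k. specialize (Hpsi k).
  pose proof (increasing_index_mono phi Hphi (S (psi k)) (psi (S k)) Hpsi).
  specialize (Hphi (psi k)). lia.
Qed.

Lemma subseq_cv (u : nat -> R) l phi :
  increasing_index phi -> Un_cv u l -> Un_cv (fun k => u (phi k)) l.
Proof.
  intros Hphi Hu e He. destruct (Hu e He) as [K HK]. exists K. intros k Hk.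
  apply HK. pose proof (increasing_index_ge phi Hphi k). lia.
Qed.

Lemma cv_of_inv_bound (u : nat -> R) l :
  (forall k, Rabs (u k - l) <= / (INR k + 1)) -> Un_cv u l.
Proof.
  intros Hu e He. destruct (archimed_cor1 e He) as [K [HK HK0]].
  exists K. intros k Hk. unfold Rdist. eapply Rle_lt_trans; [apply Hu|].
  eapply Rle_lt_trans; [|exact HK]. apply le_INR in Hk.
  apply Rinv_le_contravar; [apply lt_0_INR; exact HK0|lra].
Qed.

Lemma bounded_seq_cv_subseq (u : nat -> R) B : (forall k, Rabs (u k) <= B) ->
  exists phi l, increasing_index phi /\ Un_cv (fun k => u (phi k)) l.
Proof.
  intros HB.
  destruct (Bolzano_Weierstrass u (fun c => -B <= c <= B) (compact_P3 (-B) B)) as [l Hl].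
  { intros k. specialize (HB k). pose proof (Rle_abs (u k)).
    pose proof (Rle_abs (- u k)). rewrite Rabs_Ropp in *. lra. }
  (* [l] is a cluster value: every tail comes within [1/(k+1)] of it. *)
  assert (Hnear : forall Nk : nat * nat,
             exists p, (fst Nk <= p)%nat /\ Rabs (u p - l) < / (INR (snd Nk) + 1)).
  { intros [N k]. assert (Hpos : 0 < / (INR k + 1)).
    { apply Rinv_0_lt_compat. pose proof (pos_INR k). lra. }
    apply (Hl (fun y => Rabs (y - l) < / (INR k + 1)) N).
    exists (mkposreal _ Hpos). intros y Hy. exact Hy. }
  destruct (choice _ Hnear) as [f Hf].
  set (phi := fix phi k := match k with
                           | O => f (O, O)
                           | S k' => f (S (phi k'), S k') end).
  exists phi, l. split.
  - intros k. exact (proj1 (Hf (S (phi k), S k))).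
  - apply cv_of_inv_bound. intros k. left.
    destruct k as [|k]; [exact (proj2 (Hf (O, O)))|exact (proj2 (Hf (S (phi k), S k)))].
Qed.

Lemma bounded_seq_pt_cv_subseq N (p : nat -> pt) B :
  (forall k i, (i < N)%nat -> Rabs (p k i) <= B) ->
  exists phi q, increasing_index phi /\ inRn N q /\ cv_pt N (fun k => p (phi k)) q.
Proof.
  induction N as [|N IH]; intros HB.
  - exists (fun k => k), (fun _ => 0). split; [intros k; lia|].
    split; [intros i _; reflexivity|intros i Hi; lia].
  - destruct IH as [phi [q [Hphi [Hq Hcv]]]]; [intros; apply HB; lia|].
    destruct (bounded_seq_cv_subseq (fun k => p (phi k) N) B) as [psi [l [Hpsi Hl]]].
    { intros k. apply HB. lia. }
    exists (fun k => phi (psi k)), (fun i => if Nat.eqb i N then l else q i).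
    split; [apply increasing_index_comp; assumption|]. split.
    + intros i Hi. destruct (Nat.eqb_spec i N); [lia|]. apply Hq. lia.
    + intros i Hi. destruct (Nat.eqb_spec i N) as [->|Hne]; [exact Hl|].
      apply (subseq_cv (fun k => p (phi k) i)); [exact Hpsi|]. apply Hcv. lia.
Qed.

Lemma seq_compact_max N (K : pt -> Prop) (W : pt -> R) B M y0 :
  K y0 ->
  (forall y, K y -> forall i, (i < N)%nat -> Rabs (y i) <= B) ->
  (forall p q, (forall k, K (p k)) -> inRn N q -> cv_pt N p q -> K q) ->
  (forall p q, (forall k, K (p k)) -> K q -> cv_pt N p q -> Un_cv (fun k => W (p k)) (W q)) ->
  (forall y, K y -> W y <= M) ->
  exists q, K q /\ forall y, K y -> W y <= W q.
Proof.
  intros Hy0 HB Hclosed Hcont HM.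
  destruct (completeness (fun r => exists y, K y /\ r = W y)) as [sup [Hub Hleast]].
  { exists M. intros r [y [Hy ->]]. auto. }
  { exists (W y0). eauto. }
  assert (Happrox : forall j : nat, exists y, K y /\ sup - / (INR j + 1) < W y).
  { intros j. apply NNPP. intros Hno.
    assert (0 < / (INR j + 1)) by (apply Rinv_0_lt_compat; pose proof (pos_INR j); lra).
    assert (sup <= sup - / (INR j + 1)); [|lra].
    apply Hleast. intros r [y [Hy ->]]. apply Rnot_lt_le. intros Hlt. apply Hno. eauto. }
  destruct (choice _ Happrox) as [p Hp].
  destruct (bounded_seq_pt_cv_subseq N p B) as [phi [q [Hphi [Hq Hcv]]]].
  { intros k i Hi. apply HB; [apply Hp|exact Hi]. }
  assert (HKq : K q) by (apply (Hclosed (fun k => p (phi k)) q); auto; intros; apply Hp).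
  exists q. split; [exact HKq|].
  (* The maximizing subsequence converges both to [W q] and to the supremum. *)
  assert (Hsup : W q = sup).
  { apply (UL_sequence (fun k => W (p (phi k)))).
    - apply Hcont; auto. intros; apply Hp.
    - apply cv_of_inv_bound. intros k.
      assert (W (p (phi k)) <= sup) by (apply Hub; exists (p (phi k)); split; [apply Hp|reflexivity]).
      assert (/ (INR (phi k) + 1) <= / (INR k + 1)).
      { apply Rinv_le_contravar; [pose proof (pos_INR k); lra|].
        pose proof (le_INR _ _ (increasing_index_ge phi Hphi k)). lra. }
      pose proof (proj2 (Hp (phi k))). rewrite Rabs_left1 by lra. lra. }
  intros y Hy. rewrite Hsup. apply Hub. eauto.
Qed.

Lemma deriv_zero_at_local_max g d D : 0 < d ->
  (forall t, Rabs t < d -> g t <= g 0) -> derivable_pt_lim g 0 D -> D = 0.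
Proof.
  intros Hd Hmax HD. change D with (derive_pt g 0 (exist _ D HD)).
  apply (deriv_maximum g (-d) d); [lra|lra|].
  intros t Ht1 Ht2. apply Hmax. apply Rabs_def1; lra.
Qed.

Lemma pos_right_of_zero g D : derivable_pt_lim g 0 D -> g 0 = 0 -> 0 < D ->
  forall d, 0 < d -> exists t, 0 < t < d /\ forall c, 0 < c <= t -> 0 < g c.
Proof.
  intros HD Hg0 HDpos d Hd. destruct (HD (D / 2) ltac:(lra)) as [e He].
  pose proof (cond_pos e). set (t := Rmin (e / 2) (d / 2)).
  assert (Ht : 0 < t) by (apply Rmin_glb_lt; lra).
  pose proof (Rmin_l (e / 2) (d / 2)). pose proof (Rmin_r (e / 2) (d / 2)).
  exists t. split; [unfold t in *; lra|]. intros c Hc.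
  specialize (He c ltac:(lra) ltac:(rewrite Rabs_right; unfold t in *; lra)).
  rewrite Rplus_0_l, Hg0, Rminus_0_r in He. apply Rabs_def2 in He.
  assert (Hquot : 0 < g c / c) by lra.
  replace (g c) with (g c / c * c) by (field; lra). apply Rmult_lt_0_compat; lra.
Qed.

Lemma second_deriv_nonpos_at_local_max g g1 d D : 0 < d ->
  (forall t, Rabs t < d -> derivable_pt_lim g t (g1 t)) ->
  derivable_pt_lim g1 0 D -> (forall t, Rabs t < d -> g t <= g 0) -> D <= 0.
Proof.
  intros Hd Hg Hg1 Hmax.
  assert (Hcrit : g1 0 = 0).
  { apply (deriv_zero_at_local_max g d); auto. apply Hg. rewrite Rabs_R0. exact Hd. }
  apply Rnot_lt_le. intros HD.
  destruct (pos_right_of_zero g1 D Hg1 Hcrit HD d Hd) as [t [Ht Hpos]].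
  destruct (MVT_cor2 g g1 0 t ltac:(lra)) as [c [Hmvt Hc]].
  { intros c Hc. apply Hg. rewrite Rabs_right; lra. }
  specialize (Hpos c ltac:(lra)). specialize (Hmax t ltac:(rewrite Rabs_right; lra)).
  assert (0 < g1 c * (t - 0)) by (apply Rmult_lt_0_compat; lra). lra.
Qed.

Lemma right_deriv_of_deriv g a D : derivable_pt_lim g a D -> right_deriv g a D.
Proof.
  intros HD e He. destruct (HD e He) as [d Hd]. exists d. split; [apply cond_pos|].
  intros h Hh. apply Hd; [lra|]. rewrite Rabs_right; lra.
Qed.

Lemma right_deriv_plus f g a D1 D2 : right_deriv f a D1 -> right_deriv g a D2 ->
  right_deriv (fun x => f x + g x) a (D1 + D2).
Proof.
  intros H1 H2 e He.
  destruct (H1 (e / 2) ltac:(lra)) as [d1 [Hd1 P1]].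
  destruct (H2 (e / 2) ltac:(lra)) as [d2 [Hd2 P2]].
  exists (Rmin d1 d2). split; [apply Rmin_glb_lt; lra|]. intros h Hh.
  pose proof (Rmin_l d1 d2). pose proof (Rmin_r d1 d2).
  specialize (P1 h ltac:(lra)). specialize (P2 h ltac:(lra)).
  replace ((f (a + h) + g (a + h) - (f a + g a)) / h - (D1 + D2))
    with (((f (a + h) - f a) / h - D1) + ((g (a + h) - g a) / h - D2)) by (field; lra).
  eapply Rle_lt_trans; [apply Rabs_triang|lra].
Qed.

Lemma right_deriv_opp f a D : right_deriv f a D -> right_deriv (fun x => - f x) a (- D).
Proof.
  intros HD e He. destruct (HD e He) as [d [Hd P]]. exists d. split; [exact Hd|].
  intros h Hh. specialize (P h Hh).
  replace ((- f (a + h) - - f a) / h - - D) with (- ((f (a + h) - f a) / h - D)) by (field; lra).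
  rewrite Rabs_Ropp. exact P.
Qed.

Lemma right_deriv_pos_increase g D : right_deriv g 0 D -> 0 < D ->
  forall d, 0 < d -> exists h, 0 < h < d /\ g 0 < g h.
Proof.
  intros HD HDpos d Hd. destruct (HD (D / 2) ltac:(lra)) as [e [He P]].
  set (h := Rmin (e / 2) (d / 2)).
  assert (Hh : 0 < h) by (apply Rmin_glb_lt; lra).
  pose proof (Rmin_l (e / 2) (d / 2)). pose proof (Rmin_r (e / 2) (d / 2)).
  exists h. split; [unfold h in *; lra|].
  specialize (P h ltac:(unfold h in *; lra)). rewrite Rplus_0_l in P. apply Rabs_def2 in P.
  assert (Hquot : 0 < (g h - g 0) / h) by lra.
  pose proof (Rmult_lt_0_compat _ _ Hquot Hh) as Hprod.
  replace ((g h - g 0) / h * h) with (g h - g 0) in Hprod by (field; lra). lra.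
Qed.

Lemma upd_upd x i t s : upd (upd x i t) i s = upd x i (t + s).
Proof. apply functional_extensionality; intro j. unfold upd. destruct (Nat.eqb j i); ring. Qed.

Lemma upd_0 x i : upd x i 0 = x.
Proof. apply functional_extensionality; intro j. unfold upd. destruct (Nat.eqb j i); ring. Qed.

Lemma upd_self x i t : upd x i t i = x i + t.
Proof. unfold upd. rewrite Nat.eqb_refl. reflexivity. Qed.

Lemma upd_other x i t j : j <> i -> upd x i t j = x j.
Proof. intros Hji. unfold upd. destruct (Nat.eqb_spec j i); [contradiction|reflexivity]. Qed.

Lemma partial_at_line f i q t l :
  partial_at f i (upd q i t) l -> derivable_pt_lim (fun s => f (upd q i s)) t l.
Proof.
  unfold partial_at. intros Hl e He. destruct (Hl e He) as [d Hd].
  exists d. intros h Hh0 Hh. specialize (Hd h Hh0 Hh).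
  rewrite !upd_upd, Rplus_0_l, Rplus_0_r in Hd. exact Hd.
Qed.

Definition coord_d2 (f : pt -> R) (i : nat) (q : pt) (D : R) : Prop :=
  exists d (g1 : R -> R), 0 < d /\
    (forall t, Rabs t < d -> derivable_pt_lim (fun s => f (upd q i s)) t (g1 t)) /\
    derivable_pt_lim g1 0 D.

Lemma coord_d2_plus f g i q D1 D2 : coord_d2 f i q D1 -> coord_d2 g i q D2 ->
  coord_d2 (fun y => f y + g y) i q (D1 + D2).
Proof.
  intros [d1 [f1 [Hd1 [Hf1 Hf2]]]] [d2 [g1 [Hd2 [Hg1 Hg2]]]].
  exists (Rmin d1 d2), (fun t => f1 t + g1 t). split; [apply Rmin_glb_lt; lra|]. split.
  - intros t Ht. pose proof (Rmin_l d1 d2). pose proof (Rmin_r d1 d2).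
    exact (derivable_pt_lim_plus _ _ t _ _ (Hf1 t ltac:(lra)) (Hg1 t ltac:(lra))).
  - exact (derivable_pt_lim_plus _ _ 0 _ _ Hf2 Hg2).
Qed.

Lemma coord_d2_minus f g i q D1 D2 : coord_d2 f i q D1 -> coord_d2 g i q D2 ->
  coord_d2 (fun y => f y - g y) i q (D1 - D2).
Proof.
  intros [d1 [f1 [Hd1 [Hf1 Hf2]]]] [d2 [g1 [Hd2 [Hg1 Hg2]]]].
  exists (Rmin d1 d2), (fun t => f1 t - g1 t). split; [apply Rmin_glb_lt; lra|]. split.
  - intros t Ht. pose proof (Rmin_l d1 d2). pose proof (Rmin_r d1 d2).
    exact (derivable_pt_lim_minus _ _ t _ _ (Hf1 t ltac:(lra)) (Hg1 t ltac:(lra))).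
  - exact (derivable_pt_lim_minus _ _ 0 _ _ Hf2 Hg2).
Qed.

Lemma coord_d2_local_max f i q D : coord_d2 f i q D ->
  (exists d, 0 < d /\ forall t, Rabs t < d -> f (upd q i t) <= f q) -> D <= 0.
Proof.
  intros [d1 [g1 [Hd1 [Hg1 Hg2]]]] [d2 [Hd2 Hmax]].
  pose proof (Rmin_l d1 d2). pose proof (Rmin_r d1 d2).
  apply (second_deriv_nonpos_at_local_max (fun s => f (upd q i s)) g1 (Rmin d1 d2)).
  - apply Rmin_glb_lt; lra.
  - intros t Ht. apply Hg1. lra.
  - exact Hg2.
  - intros t Ht. rewrite upd_0. apply Hmax. lra.
Qed.

Lemma no_coord_max_of_pos_laplacian N f q D :
  (forall i, (i < N)%nat -> coord_d2 f i q (D i)) -> 0 < fsum N D ->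
  (forall i, (i < N)%nat -> exists d, 0 < d /\ forall t, Rabs t < d -> f (upd q i t) <= f q) ->
  False.
Proof.
  intros HD Hsum Hmax.
  assert (fsum N D <= fsum N (fun _ => 0)).
  { apply fsum_le. intros i Hi. exact (coord_d2_local_max f i q (D i) (HD i Hi) (Hmax i Hi)). }
  rewrite fsum_const in *. lra.
Qed.

Lemma harmonic_coord_d2 N S v q d : harmonic_on N S v -> S q -> 0 < d ->
  (forall i t, (i < N)%nat -> Rabs t < d -> S (upd q i t)) ->
  exists D, (forall i, (i < N)%nat -> coord_d2 v i q (D i)) /\ fsum N D = 0.
Proof.
  intros [d1 [d2 [[Hd1 [Hd2 _]] Hlap]]] Hq Hd Hline.
  exists (fun i => d2 i i q). split; [|exact (Hlap q Hq)].
  intros i Hi. exists d, (fun t => d1 i (upd q i t)). split; [exact Hd|]. split.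
  - intros t Ht. apply partial_at_line, Hd1; auto.
  - exact (Hd2 i i q Hi Hi Hq).
Qed.

Lemma ext_n n x l : ext n x l n = l.
Proof. unfold ext. rewrite Nat.ltb_irrefl, Nat.eqb_refl. reflexivity. Qed.

Lemma ext_inRn n x l : inRn (S n) (ext n x l).
Proof.
  intros i Hi. unfold ext.
  destruct (Nat.ltb_spec i n); [lia|]. destruct (Nat.eqb_spec i n); [lia|reflexivity].
Qed.

Lemma trunc_ext n x l : inRn n x -> trunc n (ext n x l) = x.
Proof.
  intros Hx. apply functional_extensionality; intro i. unfold ext, trunc.
  destruct (Nat.ltb_spec i n); [reflexivity|]. symmetry. apply Hx. lia.
Qed.

Lemma ext_trunc n q : inRn (S n) q -> q = ext n (trunc n q) (q n).
Proof.
  intros Hq. apply functional_extensionality; intro i. unfold ext, trunc.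
  destruct (Nat.ltb_spec i n); [reflexivity|].
  destruct (Nat.eqb_spec i n) as [->|Hne]; [reflexivity|]. apply Hq. lia.
Qed.

Lemma ext_as_upd n x l : ext n x l = upd (ext n x 0) n l.
Proof.
  apply functional_extensionality; intro i. unfold upd.
  destruct (Nat.eqb_spec i n) as [->|Hne]; [rewrite !ext_n; ring|].
  unfold ext. destruct (Nat.ltb i n); [reflexivity|].
  destruct (Nat.eqb_spec i n); [contradiction|reflexivity].
Qed.

Lemma Omega_ext n H x l : H x -> inRn n x -> 0 < l -> Omega n H (ext n x l).
Proof.
  intros Hx Hxn Hl. split; [apply ext_inRn|].
  rewrite trunc_ext, ext_n by exact Hxn. split; assumption.
Qed.

Lemma closure_self N S y : inRn N y -> S y -> closure N S y.
Proof. intros Hy HS. split; [exact Hy|]. intros r Hr. exists y. rewrite dist_refl. auto. Qed.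

Lemma dist_trunc n x y : dist n (trunc n x) (trunc n y) <= dist (S n) x y.
Proof.
  unfold dist. apply sqrt_le_1_alt. change (fsum (S n) ?f) with (fsum n f + f n).
  rewrite (fsum_ext n _ (fun i => (x i - y i) ^ 2)).
  - pose proof (pow2_ge_0 (x n - y n)). lra.
  - intros i Hi. unfold trunc. destruct (Nat.ltb_spec i n); [reflexivity|lia].
Qed.

Lemma closure_Omega n H q :
  closure (S n) (Omega n H) q -> closure n H (trunc n q) /\ 0 <= q n.
Proof.
  intros [Hq Hclose]. split.
  - split.
    + intros i Hi. unfold trunc. destruct (Nat.ltb_spec i n); [lia|reflexivity].
    + intros r Hr. destruct (Hclose r Hr) as [z [[_ [Hz _]] Hzq]].
      exists (trunc n z). split; [exact Hz|]. eapply Rle_lt_trans; [apply dist_trunc|exact Hzq].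
  - apply Rnot_lt_le. intros Hneg.
    destruct (Hclose (- q n) ltac:(lra)) as [z [[_ [_ Hz]] Hzq]].
    pose proof (coord_le_dist (S n) z q n (Nat.lt_succ_diag_r n)).
    pose proof (Rle_abs (z n - q n)). lra.
Qed.

Lemma ext0_closure n H x : H x -> inRn n x -> closure (S n) (Omega n H) (ext n x 0).
Proof.
  intros Hx Hxn. split; [apply ext_inRn|]. intros r Hr. pose proof (pos_INR (S n)).
  set (l := r / (INR (S n) + 1)).
  assert (Hl : 0 < l) by (unfold l; apply Rdiv_lt_0_compat; lra).
  exists (ext n x l). split; [apply Omega_ext; assumption|].
  eapply Rle_lt_trans; [|apply (INR_mul_shrink (S n) r Hr)].
  apply dist_coord_bound. intros i Hi. fold l. unfold ext.
  destruct (Nat.ltb i n); [rewrite Rminus_diag, Rabs_R0; lra|].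
  destruct (Nat.eqb i n); [rewrite Rminus_0_r, Rabs_right; lra|].
  rewrite Rminus_diag, Rabs_R0; lra.
Qed.

Lemma closure_coord_bound n H : bounded_set n H ->
  exists B, 0 <= B /\ forall x, closure n H x -> forall i, (i < n)%nat -> Rabs (x i) <= B.
Proof.
  intros [M HM]. exists (Rabs M). split; [apply Rabs_pos|].
  intros x [_ Hclose] i Hi. apply Rnot_lt_le. intros Hlt.
  destruct (Hclose (Rabs (x i) - Rabs M) ltac:(lra)) as [z [Hz Hzx]].
  pose proof (HM z Hz). pose proof (Rle_abs M).
  pose proof (coord_le_dist n z origin i Hi) as Hz0.
  replace (z i - origin i) with (z i) in Hz0 by (unfold origin; ring).
  pose proof (coord_le_dist n z x i Hi) as Hzx'. rewrite Rabs_minus_sym in Hzx'.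
  pose proof (Rabs_triang_inv (x i) (z i)). lra.
Qed.

Lemma bounded_on_closure N S f : (forall y, S y -> inRn N y) ->
  cont_on N (closure N S) f -> bounded_on S f -> bounded_on (closure N S) f.
Proof.
  intros HS Hf [M HM]. exists (M + 1). intros y Hy.
  destruct (Hf y Hy 1 ltac:(lra)) as [d [Hd Hfd]].
  destruct (proj2 Hy d Hd) as [z [Hz Hzy]].
  specialize (Hfd z (closure_self N S z (HS z Hz) Hz) ltac:(rewrite dist_sym; exact Hzy)).
  specialize (HM z Hz). pose proof (Rabs_triang_inv (f y) (f z)).
  rewrite Rabs_minus_sym in Hfd. lra.
Qed.

Lemma trunc_upd_lt n q i t : (i < n)%nat -> trunc n (upd q i t) = upd (trunc n q) i t.
Proof.
  intros Hi. apply functional_extensionality; intro j. unfold trunc, upd.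
  destruct (Nat.ltb_spec j n), (Nat.eqb_spec j i); subst; try reflexivity; lia.
Qed.

Lemma trunc_upd_n n q t : trunc n (upd q n t) = trunc n q.
Proof.
  apply functional_extensionality; intro j. unfold trunc.
  destruct (Nat.ltb_spec j n); [apply upd_other; lia|reflexivity].
Qed.

Lemma Omega_coord_nbhd n H q : is_open n H -> Omega n H q ->
  exists d, 0 < d /\ forall i t, (i < S n)%nat -> Rabs t < d -> Omega n H (upd q i t).
Proof.
  intros [_ Hopen] [Hq [Hx Hpos]].
  destruct (Hopen _ Hx) as [r [Hr Hball]]. pose proof (pos_INR n).
  set (d := Rmin (r / (INR n + 1)) (q n)).
  assert (Hdr : d <= r / (INR n + 1)) by apply Rmin_l.
  assert (Hdq : d <= q n) by apply Rmin_r.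
  exists d. split; [apply Rmin_glb_lt; [apply Rdiv_lt_0_compat|]; lra|].
  intros i t Hi Ht. split; [|split].
  - intros j Hj. rewrite upd_other by lia. apply Hq. exact Hj.
  - destruct (Nat.eq_dec i n) as [->|Hne]; [rewrite trunc_upd_n; exact Hx|].
    rewrite trunc_upd_lt by lia. apply Hball.
    + intros j Hj. rewrite upd_other by lia. unfold trunc.
      destruct (Nat.ltb_spec j n); [lia|reflexivity].
    + eapply Rle_lt_trans; [apply dist_upd|].
      eapply Rle_lt_trans; [|apply (INR_mul_shrink n r Hr)].
      apply Rmult_le_compat_l; lra.
  - apply Rabs_def2 in Ht. destruct Ht as [Ht1 Ht2].
    destruct (Nat.eq_dec i n) as [->|Hne]; [rewrite upd_self; lra|rewrite upd_other by lia; lra].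
Qed.

Lemma sqnorm_upd_lt n q i t : (i < n)%nat ->
  sqnorm n (upd q i t) = sqnorm n q + ((q i + t) ^ 2 - q i ^ 2).
Proof.
  unfold sqnorm. induction n as [|n IH]; intros Hi; [lia|].
  change (fsum (S n) ?f) with (fsum n f + f n).
  destruct (Nat.eq_dec i n) as [->|Hne].
  - rewrite upd_self, (fsum_ext n _ (fun j => q j ^ 2)); [ring|].
    intros j Hj. rewrite upd_other by lia. reflexivity.
  - rewrite IH, upd_other by lia. ring.
Qed.

Lemma sqnorm_upd_n n q t : sqnorm n (upd q n t) = sqnorm n q.
Proof. apply fsum_ext. intros j Hj. rewrite upd_other by lia. reflexivity. Qed.

(** The barrier [-c lambda + eps (|x|^2 + 1 - e^(-lambda))] on [R^(n+1)]: strictly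
    subharmonic, with slope [eps - c] at [lambda = 0]. *)

Definition barrier (n : nat) (c eps : R) (y : pt) : R :=
  - c * y n + eps * (sqnorm n y + (1 - exp (- y n))).

Lemma barrier_le n c eps y : 0 <= eps -> 0 <= y n ->
  barrier n c eps y <= - c * y n + eps * (sqnorm n y + 1).
Proof.
  intros Heps Hy. unfold barrier. pose proof (exp_pos (- y n)).
  apply Rplus_le_compat_l, Rmult_le_compat_l; lra.
Qed.

(* Horizontally the barrier is [eps x_i^2] plus terms constant along the line. *)
Lemma barrier_horizontal_d2 n c eps q i : (i < n)%nat ->
  coord_d2 (barrier n c eps) i q (2 * eps).
Proof.
  intros Hi. exists 1, (fun t => eps * (2 * (q i + t))). split; [lra|]. split.
  - intros t _.
    apply (derivable_pt_lim_ext
             (fun s => - c * q n + eps * (sqnorm n q + ((q i + s) ^ 2 - q i ^ 2) + (1 - exp (- q n))))).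
    { intros s. unfold barrier. rewrite sqnorm_upd_lt, upd_other by lia. reflexivity. }
    apply is_derive_Reals. auto_derive; [exact I|ring].
  - apply is_derive_Reals. auto_derive; [exact I|ring].
Qed.

(* Vertically the barrier is [- c lambda - eps e^(-lambda)] plus a constant. *)
Lemma barrier_vertical_deriv n c eps q t :
  derivable_pt_lim (fun s => barrier n c eps (upd q n s)) t (- c + eps * exp (- (q n + t))).
Proof.
  apply (derivable_pt_lim_ext
           (fun s => - c * (q n + s) + eps * (sqnorm n q + (1 - exp (- (q n + s)))))).
  { intros s. unfold barrier. rewrite sqnorm_upd_n, upd_self. reflexivity. }
  apply is_derive_Reals. auto_derive; [exact I|ring].
Qed.

Lemma barrier_vertical_d2 n c eps q :
  coord_d2 (barrier n c eps) n q (- (eps * exp (- q n))).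
Proof.
  exists 1, (fun t => - c + eps * exp (- (q n + t))). split; [lra|]. split.
  - intros t _. apply barrier_vertical_deriv.
  - apply is_derive_Reals. auto_derive; [exact I|]. rewrite Rplus_0_r. ring.
Qed.

Lemma barrier_laplacian_pos n eps (lambda : R) : (1 <= n)%nat -> 0 < eps -> 0 < lambda ->
  0 < fsum (S n) (fun i => if Nat.ltb i n then 2 * eps else - (eps * exp (- lambda))).
Proof.
  intros Hn Heps Hl. change (fsum (S n) ?f) with (fsum n f + f n). cbv beta.
  rewrite Nat.ltb_irrefl, (fsum_ext n _ (fun _ => 2 * eps)), fsum_const.
  - assert (1 <= INR n) by (apply (le_INR 1); exact Hn).
    assert (exp (- lambda) < 1) by (rewrite <- exp_0; apply exp_increasing; lra).
    assert (eps * exp (- lambda) < eps * 1) by (apply Rmult_lt_compat_l; lra). nra.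
  - intros i Hi. destruct (Nat.ltb_spec i n); [reflexivity|lia].
Qed.

Lemma barrier_cv n c eps p q : cv_pt (S n) p q ->
  Un_cv (fun k => barrier n c eps (p k)) (barrier n c eps q).
Proof.
  intros Hcv. unfold barrier.
  pose proof (Hcv n (Nat.lt_succ_diag_r n)) as Hn.
  apply CV_plus.
  - apply CV_mult; [apply cv_const|exact Hn].
  - apply CV_mult; [apply cv_const|]. apply CV_plus; [apply sqnorm_cv, cv_pt_pred, Hcv|].
    apply CV_minus; [apply cv_const|].
    apply (continuity_seq (fun s => exp (- s))); [|exact Hn].
    apply derivable_continuous_pt. reg.
Qed.

Definition DtN_extension (n : nat) (H : pt -> Prop) (phi u w v : pt -> R) : Prop :=
  harmonic_on (S n) (Omega n H) v /\
  bounded_on (Omega n H) v /\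
  cont_on (S n) (closure (S n) (Omega n H)) v /\
  (forall x, H x -> v (ext n x 0) = u x) /\
  (forall x l, boundary n H x -> 0 <= l -> v (ext n x l) = phi x) /\
  (forall x, H x -> right_deriv (fun l => v (ext n x l)) 0 (- w x)).

Section Comparison.

Variables (n : nat) (H : pt -> Prop) (phi u1 u2 w1 w2 v1 v2 : pt -> R).
Hypothesis n_pos : (1 <= n)%nat.
Hypothesis H_open : is_open n H.
Hypothesis H_bounded : bounded_set n H.
Hypothesis ext1 : DtN_extension n H phi u1 w1 v1.
Hypothesis ext2 : DtN_extension n H phi u2 w2 v2.
Hypothesis w_le : forall x, H x -> w1 x <= w2 x.

Definition closed_cyl (L : R) (y : pt) : Prop :=
  closure (S n) (Omega n H) y /\ y n <= L.

Definition comparison (c eps : R) (y : pt) : R := v1 y - v2 y + barrier n c eps y.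

Lemma closed_cyl_cases L q : closed_cyl L q ->
  (boundary n H (trunc n q) /\ 0 <= q n) \/ q n = L \/
  (H (trunc n q) /\ q n = 0) \/ (Omega n H q /\ q n < L).
Proof.
  intros [Hq HqL]. destruct (closure_Omega n H q Hq) as [Hx Hq0].
  destruct (classic (H (trunc n q))) as [HH|HnH]; [|left; split; [split|]; assumption].
  right. destruct HqL as [HqL|]; [|left; assumption]. right.
  destruct Hq0 as [Hq0|Hq0]; [right|left; split; auto].
  split; [|exact HqL]. split; [apply Hq|split; assumption].
Qed.

Lemma extension_diff_bound : exists MV, 0 < MV /\
  forall y, closure (S n) (Omega n H) y -> Rabs (v1 y - v2 y) <= MV.
Proof.
  destruct ext1 as [_ [Hb1 [Hc1 _]]]. destruct ext2 as [_ [Hb2 [Hc2 _]]].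
  destruct (bounded_on_closure (S n) (Omega n H) v1 (fun y Hy => proj1 Hy) Hc1 Hb1) as [M1 HM1].
  destruct (bounded_on_closure (S n) (Omega n H) v2 (fun y Hy => proj1 Hy) Hc2 Hb2) as [M2 HM2].
  exists (Rabs M1 + Rabs M2 + 1). split; [pose proof (Rabs_pos M1); pose proof (Rabs_pos M2); lra|].
  intros y Hy. specialize (HM1 y Hy). specialize (HM2 y Hy).
  pose proof (Rle_abs M1). pose proof (Rle_abs M2). pose proof (Rabs_triang (v1 y) (- v2 y)).
  rewrite Rabs_Ropp in *. unfold Rminus. lra.
Qed.

Lemma cyl_coord_bound : exists B, 0 <= B /\
  forall y, closure (S n) (Omega n H) y -> forall i, (i < n)%nat -> Rabs (y i) <= B.
Proof.
  destruct (closure_coord_bound n H H_bounded) as [B [HB0 HB]].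
  exists B. split; [exact HB0|]. intros y Hy i Hi.
  specialize (HB _ (proj1 (closure_Omega n H y Hy)) i Hi).
  unfold trunc in HB. destruct (Nat.ltb_spec i n); [exact HB|lia].
Qed.

Lemma cyl_sqnorm_bound : exists R, 1 <= R /\
  forall y, closure (S n) (Omega n H) y -> sqnorm n y + 1 <= R.
Proof.
  destruct cyl_coord_bound as [B [HB0 HB]]. exists (INR n * B ^ 2 + 1). split.
  - pose proof (pos_INR n). pose proof (pow2_ge_0 B). nra.
  - intros y Hy. apply Rplus_le_compat_r. unfold sqnorm. rewrite <- fsum_const.
    apply fsum_le. intros i Hi. rewrite <- (pow2_abs (y i)).
    apply pow_incr. split; [apply Rabs_pos|exact (HB y Hy i Hi)].
Qed.

Lemma comparison_attains_max c eps L y0 : 0 <= c -> 0 <= eps -> closed_cyl L y0 ->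
  exists q, closed_cyl L q /\ forall y, closed_cyl L y -> comparison c eps y <= comparison c eps q.
Proof.
  intros Hc Heps Hy0.
  destruct ext1 as [_ [_ [Hc1 _]]]. destruct ext2 as [_ [_ [Hc2 _]]].
  destruct extension_diff_bound as [MV [_ HMV]].
  destruct cyl_coord_bound as [B [HB0 HB]]. destruct cyl_sqnorm_bound as [R [_ HR]].
  apply (seq_compact_max (S n) (closed_cyl L) (comparison c eps) (B + Rabs L) (MV + eps * R) y0).
  - exact Hy0.
  - intros y [Hy HyL] i Hi. pose proof (Rabs_pos L). pose proof (Rle_abs L).
    destruct (Nat.eq_dec i n) as [->|Hne]; [|pose proof (HB y Hy i ltac:(lia)); lra].
    pose proof (proj2 (closure_Omega n H y Hy)). rewrite Rabs_right; lra.
  - intros p q Hp Hq Hcv. split.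
    + apply (closure_seq_closed _ _ p); [intros; apply Hp|exact Hq|exact Hcv].
    + apply (@Rle_cv_lim (fun k => p k n) (fun _ => L)); [intros; apply Hp| |].
      * apply Hcv. lia.
      * apply cv_const.
  - intros p q Hp Hq Hcv. unfold comparison. apply CV_plus; [apply CV_minus|apply barrier_cv, Hcv].
    + apply (cont_on_seq (S n) _ v1 p q Hc1); [intros; apply Hp|apply Hq|exact Hcv].
    + apply (cont_on_seq (S n) _ v2 p q Hc2); [intros; apply Hp|apply Hq|exact Hcv].
  - intros y [Hy HyL]. unfold comparison. pose proof (proj2 (closure_Omega n H y Hy)).
    pose proof (barrier_le n c eps y Heps ltac:(assumption)). pose proof (HR y Hy).
    pose proof (HMV y Hy). pose proof (Rle_abs (v1 y - v2 y)).
    assert (0 <= c * y n) by (apply Rmult_le_pos; assumption).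
    assert (eps * (sqnorm n y + 1) <= eps * R) by (apply Rmult_le_compat_l; assumption). lra.
Qed.

(* On the lateral boundary both extensions equal [phi]. *)
Lemma comparison_le_lateral c eps q : 0 <= c -> 0 <= eps -> inRn (S n) q ->
  boundary n H (trunc n q) -> 0 <= q n -> comparison c eps q <= eps * (sqnorm n q + 1).
Proof.
  intros Hc Heps Hq Hbd Hq0. destruct ext1 as [_ [_ [_ [_ [Hl1 _]]]]].
  destruct ext2 as [_ [_ [_ [_ [Hl2 _]]]]].
  unfold comparison. rewrite (ext_trunc n q Hq) at 1 2. rewrite Hl1, Hl2 by assumption.
  pose proof (barrier_le n c eps q Heps Hq0).
  assert (0 <= c * q n) by (apply Rmult_le_pos; assumption). lra.
Qed.

Lemma comparison_le_top c eps MV q : 0 <= eps -> 0 <= q n ->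
  Rabs (v1 q - v2 q) <= MV -> c * q n = MV -> comparison c eps q <= eps * (sqnorm n q + 1).
Proof.
  intros Heps Hq0 HMV HcL. unfold comparison.
  pose proof (barrier_le n c eps q Heps Hq0). pose proof (Rle_abs (v1 q - v2 q)). lra.
Qed.

(* At the bottom the comparison function strictly increases upwards: [w1 <= w2]. *)
Lemma comparison_bottom_increase c eps L x : H x -> c < eps -> 0 < L ->
  exists t, 0 < t < L /\ comparison c eps (ext n x 0) < comparison c eps (ext n x t).
Proof.
  intros Hx Hce HL. destruct ext1 as [_ [_ [_ [_ [_ Hr1]]]]].
  destruct ext2 as [_ [_ [_ [_ [_ Hr2]]]]].
  assert (Hb : derivable_pt_lim (fun t => barrier n c eps (ext n x t)) 0 (- c + eps)).
  { pose proof (barrier_vertical_deriv n c eps (ext n x 0) 0) as Hd.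
    rewrite ext_n, Rplus_0_r, Ropp_0, exp_0, Rmult_1_r in Hd.
    apply (derivable_pt_lim_ext _ _ _ _ (fun t => f_equal _ (eq_sym (ext_as_upd n x t))) Hd). }
  assert (Hrd : right_deriv
            (fun t => v1 (ext n x t) + - v2 (ext n x t) + barrier n c eps (ext n x t)) 0
            (- w1 x + - - w2 x + (- c + eps))).
  { apply right_deriv_plus; [apply right_deriv_plus|apply right_deriv_of_deriv, Hb].
    - apply Hr1, Hx.
    - apply right_deriv_opp, Hr2, Hx. }
  apply (right_deriv_pos_increase _ _ Hrd); [pose proof (w_le x Hx); lra|exact HL].
Qed.

(* In the interior no maximum is possible: the comparison function is strictly
   subharmonic there. *)
Lemma comparison_no_interior_max c eps L q : 0 < eps -> Omega n H q -> q n < L ->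
  (forall y, closed_cyl L y -> comparison c eps y <= comparison c eps q) -> False.
Proof.
  intros Heps Hq HqL Hmax. destruct ext1 as [Hh1 _]. destruct ext2 as [Hh2 _].
  destruct (Omega_coord_nbhd n H q H_open Hq) as [d [Hd Hline]].
  destruct (harmonic_coord_d2 (S n) _ v1 q d Hh1 Hq Hd Hline) as [D1 [HD1 Hsum1]].
  destruct (harmonic_coord_d2 (S n) _ v2 q d Hh2 Hq Hd Hline) as [D2 [HD2 Hsum2]].
  set (Db := fun i => if Nat.ltb i n then 2 * eps else - (eps * exp (- q n))).
  apply (no_coord_max_of_pos_laplacian (S n) (comparison c eps) q (fun i => D1 i - D2 i + Db i)).
  - intros i Hi. unfold comparison. apply coord_d2_plus; [apply coord_d2_minus; auto|].
    unfold Db. destruct (Nat.ltb_spec i n); [now apply barrier_horizontal_d2|].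
    replace i with n by lia. apply barrier_vertical_d2.
  - rewrite fsum_plus, (fsum_ext _ _ (fun i => D1 i + - D2 i)) by (intros; ring).
    rewrite fsum_plus, fsum_opp, Hsum1, Hsum2, Ropp_0, !Rplus_0_l.
    apply barrier_laplacian_pos; [exact n_pos|exact Heps|apply Hq].
  - intros i Hi. exists (Rmin d (L - q n)).
    split; [apply Rmin_glb_lt; lra|]. intros t Ht.
    pose proof (Rmin_l d (L - q n)). pose proof (Rmin_r d (L - q n)).
    assert (HO : Omega n H (upd q i t)) by (apply Hline; [exact Hi|lra]).
    apply Hmax. split; [exact (closure_self _ _ _ (proj1 HO) HO)|].
    apply Rabs_def2 in Ht. destruct Ht.
    destruct (Nat.eq_dec i n) as [->|Hne]; [rewrite upd_self|rewrite upd_other by lia]; lra.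
Qed.

Lemma extension_bottom_le x0 : H x0 -> v1 (ext n x0 0) <= v2 (ext n x0 0).
Proof.
  intros Hx0. apply Rnot_lt_le. intros Hlt.
  set (m := v1 (ext n x0 0) - v2 (ext n x0 0)).
  assert (Hm : 0 < m) by (unfold m; lra).
  destruct extension_diff_bound as [MV [HMV HvMV]].
  destruct cyl_sqnorm_bound as [R [HR1 HR]].
  (* Parameters: [eps R = m / 2], slope [c = eps / 2] and cut-off height [c L = MV]. *)
  set (eps := m / (2 * R)). set (c := eps / 2). set (L := MV / c).
  assert (Heps : 0 < eps) by (unfold eps; apply Rdiv_lt_0_compat; lra).
  assert (HepsR : eps * R = m / 2) by (unfold eps; field; lra).
  assert (Hc : 0 < c) by (unfold c; lra).
  assert (HL : 0 < L) by (unfold L; apply Rdiv_lt_0_compat; lra).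
  assert (HcL : c * L = MV) by (unfold L; field; lra).
  assert (Hx0K : closed_cyl L (ext n x0 0)).
  { split; [apply ext0_closure; [exact Hx0|apply H_open, Hx0]|rewrite ext_n; lra]. }
  assert (Hstart : eps * R < comparison c eps (ext n x0 0)).
  { unfold comparison, barrier. rewrite ext_n, Ropp_0, exp_0. fold m.
    pose proof (sqnorm_nonneg n (ext n x0 0)).
    assert (0 <= eps * sqnorm n (ext n x0 0)) by (apply Rmult_le_pos; lra). lra. }
  destruct (comparison_attains_max c eps L (ext n x0 0)) as [q [Kq Hmax]]; [lra|lra|exact Hx0K|].
  pose proof (Hmax _ Hx0K) as Hqmax.
  assert (Hcap : eps * (sqnorm n q + 1) <= eps * R)
    by (apply Rmult_le_compat_l; [lra|apply HR, Kq]).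
  destruct (closed_cyl_cases L q Kq) as [[Hbd Hq0]|[Htop|[[Hx Hbot]|[Hq HqL]]]].
  - pose proof (comparison_le_lateral c eps q ltac:(lra) ltac:(lra) (proj1 (proj1 Kq)) Hbd Hq0).
    lra.
  - pose proof (proj2 (closure_Omega n H q (proj1 Kq))).
    pose proof (comparison_le_top c eps MV q ltac:(lra) ltac:(lra) (HvMV q (proj1 Kq))
                  ltac:(rewrite Htop; exact HcL)). lra.
  - destruct (comparison_bottom_increase c eps L (trunc n q) Hx ltac:(unfold c; lra) HL)
      as [t [Ht Hinc]].
    rewrite (ext_trunc n q (proj1 (proj1 Kq))), Hbot in Hmax.
    assert (Kt : closed_cyl L (ext n (trunc n q) t)).
    { split; [|rewrite ext_n; lra]. apply closure_self; [apply ext_inRn|].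
      apply Omega_ext; [exact Hx|apply H_open, Hx|lra]. }
    specialize (Hmax _ Kt). lra.
  - exact (comparison_no_interior_max c eps L q Heps Hq HqL Hmax).
Qed.

End Comparison.

Theorem mainTheorem8 (n : nat) (H : pt -> Prop) (phi u1 u2 w1 w2 : pt -> R) :
  (1 <= n)%nat ->
  bounded_domain n H ->
  C2_on n H u1 -> C2_on n H u2 ->
  cont_on n (closure n H) u1 -> cont_on n (closure n H) u2 ->
  bounded_on (closure n H) u1 -> bounded_on (closure n H) u2 ->
  (forall x, boundary n H x -> u1 x = phi x /\ u2 x = phi x) ->
  DtN n H phi u1 w1 -> DtN n H phi u2 w2 ->
  (forall x, H x -> w1 x <= w2 x) ->
  forall x, H x -> u1 x <= u2 x.
Proof.
  intros Hn [Hopen [_ [_ Hbounded]]] _ _ _ _ _ _ _ [v1 Hext1] [v2 Hext2] Hw x Hx.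
  pose proof (extension_bottom_le n H phi u1 u2 w1 w2 v1 v2 Hn Hopen Hbounded Hext1 Hext2 Hw x Hx)
    as Hle.
  destruct Hext1 as (_ & _ & _ & Hbot1 & _). destruct Hext2 as (_ & _ & _ & Hbot2 & _).
  rewrite Hbot1, Hbot2 in Hle by exact Hx. exact Hle.
Qed.
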